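(* Let $p$ be a hyperbolic polynomial of degree $d$ on $\mathbb{R}^n$, and suppose an evaluation oracle for $p$ is given which returns $p(z)$ for any $z\in\mathbb{C}^n$ in time $\mathcal{T}_O$. Then for any $x\in\mathbb{R}^n$ (with $p(x)\neq0$) and any $w\in\mathbb{R}^n$, the vector $\nabla^2(-\ln p(x))\,w$ can be computed in $O(nd^2\mathcal{T}_O)$ time.
   Context: A hyperbolic polynomial is a real homogeneous polynomial $p$ for which there is a direction $e$ such that $t\mapsto p(te-x)$ has only real roots for all $x\in\mathbb{R}^n$. *)

From HB Require Import structures.
From mathcomp Require Import all_boot all_order all_algebra.
From mathcomp Require Import mpoly.
From mathcomp Require Import complex.
Set Implicit Arguments. Unset Strict Implicit. Unset Printing Implicit Defensive.
Import Order.TTheory GRing.Theory Num.Theory.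
Local Open Scope ring_scope.

Definition mpolyC (R : rcfType) (n : nat) (p : {mpoly R[n]}) : {mpoly R[i][n]} :=
  map_mpoly (real_complex R) p.

Definition cevalp (R : rcfType) (n : nat) (p : {mpoly R[n]}) (z : 'I_n -> R[i]) : R[i] :=
  (mpolyC p).@[z].

Definition hyperbolic (R : rcfType) (n d : nat) (p : {mpoly R[n]}) : Prop :=
  p \is d.-homog /\
  exists e : 'I_n -> R, forall (x : 'I_n -> R) (t : R[i]),
    cevalp p (fun i => t * (real_complex R (e i)) - (real_complex R (x i))) = 0 -> Im t = 0.

Definition hess_neglog (R : rcfType) (n : nat) (p : {mpoly R[n]})
  (x : 'I_n -> R) (i j : 'I_n) : R :=
  (p^`M(i)).@[x] * (p^`M(j)).@[x] / (p.@[x]) ^+ 2 - ((p^`M(i))^`M(j)).@[x] / p.@[x].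

Definition hess_neglog_mul (R : rcfType) (n : nat) (p : {mpoly R[n]})
  (x w : 'I_n -> R) (i : 'I_n) : R :=
  \sum_(j < n) hess_neglog p x i j * w j.

(* Oracle model of computation (straight-line algebraic programs over C *)
(* with an evaluation oracle).  Registers hold complex numbers.  The    *)
(* initial registers are x_0..x_{n-1}, w_0..w_{n-1} (embedded in C).   *)
(* Each instruction appends one register.  References to registers are  *)
(* natural-number indices; out-of-range references read 0.             *)
Inductive instr (C : Type) : Type :=
  | ICst of C
  | IAdd of nat & nat
  | ISub of nat & nat
  | IMul of nat & nat
  | IDiv of nat & nat         (* mathcomp division; x / 0 = 0 *)
  | IOracle of seq nat.       (* oracle call p(z), z_k = register (nth k) *)

Record program (C : Type) : Type := Program {
  instrs : seq (instr C);
  outputs : seq nat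
}.

Section Semantics.
Variables (R : rcfType) (n : nat) (oracle : ('I_n -> R[i]) -> R[i]).

Definition exec_instr (env : seq R[i]) (c : instr R[i]) : R[i] :=
  let rd k := nth 0 env k in
  match c with
  | ICst a => a
  | IAdd a b => rd a + rd b
  | ISub a b => rd a - rd b
  | IMul a b => rd a * rd b
  | IDiv a b => rd a / rd b
  | IOracle s => oracle (fun k : 'I_n => rd (nth 0%N s k))
  end.

Definition run_instrs (env : seq R[i]) (cs : seq (instr R[i])) : seq R[i] :=
  foldl (fun e c => rcons e (exec_instr e c)) env cs.

Definition run (P : program R[i]) (x w : 'I_n -> R) (k : 'I_n) : R[i] :=
  let env0 := [seq (real_complex R (x j)) | j <- enum 'I_n] ++ [seq (real_complex R (w j)) | j <- enum 'I_n] in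
  let env := run_instrs env0 (instrs P) in
  nth 0 env (nth 0%N (outputs P) k).
End Semantics.

Definition instr_cost (C : Type) (TO : nat) (c : instr C) : nat :=
  match c with IOracle _ => TO | _ => 1%N end.

Definition cost (C : Type) (TO : nat) (P : program C) : nat :=
  \sum_(c <- instrs P) instr_cost TO c.

From HB Require Import structures.
From mathcomp Require Import all_boot all_order all_algebra.
From mathcomp Require Import mpoly complex qpoly.
From mathcomp Require Import zify ring.
From Stdlib Require Import FunctionalExtensionality.
Import Order.TTheory GRing.Theory Num.Theory.
Local Open Scope ring_scope.
Set Implicit Arguments. Unset Strict Implicit. Unset Printing Implicit Defensive.

(* If q is a univariate polynomial of degree at most d, then
     q'(0) = \sum_(l <= d) a_l q(l),
   where a_l is the coefficient of X in the l-th Lagrange polynomial on the nodes 0, ..., d.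
   Since p is homogeneous of degree d, every restriction t |-> p(y + t u) has degree at most d,
   so each directional derivative of p (or of one of its partial derivatives) at a point costs
   d + 1 evaluations.  With g = grad p(x), the Hessian-vector product of -ln p is
     (g_i (w . g) / p(x) - (D_w d_i p)(x)) / p(x).
   The gradients of p at the points x + k w, k <= d, take n (d + 1)^2 evaluations, and one
   more interpolation in k gives both w . g = (D_w p)(x) and D_w grad p(x): O(n d^2)
   operations in all. *)

(** * Derivatives from samples *)

Section LineRestriction.
Variables (K : comNzRingType) (n : nat).
Implicit Types (p q : {mpoly K[n]}) (h : 'I_n -> {poly K}).

Local Notation poly_subst h p := (mmap (@polyC K) h p).

Lemma horner_mmap h p t : (poly_subst h p).[t] = p.@[fun j => (h j).[t]].
Proof.
rewrite /mmap mevalE horner_sum; apply: eq_bigr => m _.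
rewrite hornerM hornerC /mmap1 horner_prod; congr (_ * _).
by apply: eq_bigr => j _; rewrite horner_exp.
Qed.

Lemma deriv_mmap h p :
  (poly_subst h p)^`() = \sum_(j < n) (h j)^`() * poly_subst h (p^`M(j)).
Proof.
(* Both sides are additive in p and obey the Leibniz rule, so constants and variables suffice. *)
pose chain q := (poly_subst h q)^`() = \sum_(j < n) (h j)^`() * poly_subst h (q^`M(j)).
have chainC c : chain c%:MP.
  by rewrite /chain mmapC derivC big1 // => j _; rewrite mderivC mmap0 mulr0.
have chainD q1 q2 : chain q1 -> chain q2 -> chain (q1 + q2).
  rewrite /chain !mmapD derivD => -> ->; rewrite -big_split /=.
  by apply: eq_bigr => j _; rewrite mderivD mmapD mulrDr.
have chainM q1 q2 : chain q1 -> chain q2 -> chain (q1 * q2).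
  rewrite /chain rmorphM derivM /= => -> ->.
  rewrite mulr_suml mulr_sumr -big_split /=; apply: eq_bigr => j _.
  by rewrite mderivM mmapD !rmorphM /= mulrDr !mulrA [_ * poly_subst h q1]mulrC.
have chainX i : chain 'X_i.
  rewrite /chain mmapX mmap1U (bigD1 i) //= big1 ?addr0 => [|j ji].
    rewrite mderivX mnm1E eqxx mmapZ mmapX /mmap1 big1 ?polyC1 ?mulr1 // => k _.
    by rewrite mnmBE subnn.
  by rewrite mderivX mnm1E eq_sym (negbTE ji) scale0r mmap0 mulr0.
have chainXm m : chain 'X_[m].
  rewrite mpolyXE_id; apply: big_ind => [|q1 q2|i _]; first by rewrite -mpolyC1; apply: chainC.
    exact: chainM.
  elim: (m i) => [|k IHk]; first by rewrite expr0 -mpolyC1; apply: chainC.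
  by rewrite exprS; apply: chainM.
elim/mpolyind: p => [|c m p _ _ chain_p]; first by rewrite -mpolyC0; apply: chainC.
by apply: chainD => //; rewrite -mul_mpolyC; apply: chainM.
Qed.

Lemma size_mmap1 h m : (forall j, size (h j) <= 2)%N -> (size (mmap1 h m) <= (mdeg m).+1)%N.
Proof.
move=> size_h; rewrite /mmap1 mdegE.
apply: (big_ind2 (fun (q : {poly K}) k => size q <= k.+1)%N) => [|q1 k1 q2 k2 le1 le2|j _].
- by rewrite size_poly1.
- by apply: leq_trans (size_polyMleq _ _) _; lia.
apply: leq_trans (size_poly_exp_leq _ _) _; have := size_h j; nia.
Qed.

Lemma size_mmap h p d : (forall j, size (h j) <= 2)%N -> (msize p <= d.+1)%N ->
  (size (poly_subst h p) <= d.+1)%N.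
Proof.
move=> size_h size_p; rewrite /mmap big_seq.
apply: (big_ind (fun q : {poly K} => size q <= d.+1)%N) => [|q1 q2 le1 le2|m pm].
- by rewrite size_poly0.
- by apply: leq_trans (size_polyD _ _) _; rewrite geq_max le1.
apply: leq_trans (size_polyMleq _ _) _.
have := size_mmap1 m size_h; have := msize_mdeg_lt pm; have := size_polyC_leq1 p@_m.
move: (size _) (size _) (mdeg m) => a b k; lia.
Qed.

End LineRestriction.

Lemma msize_mderiv (K : nzRingType) n (p : {mpoly K[n]}) i : (msize (p^`M(i)) <= msize p)%N.
Proof.
rewrite [X in (X <= _)%N]msizeE; apply/bigmax_leqP_seq => m pm _.
have : (m + U_(i))%MM \in msupp p.
  by move: pm; rewrite !mcoeff_msupp mcoeff_mderiv; apply: contraNN => /eqP ->; rewrite mul0rn.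
by move=> /msize_mdeg_lt; rewrite mdegD mdeg1 addn1; apply: ltnW.
Qed.

Lemma msize_dhomog (K : nzRingType) n d (p : {mpoly K[n]}) :
  p \is d.-homog -> (msize p <= d.+1)%N.
Proof. by move=> /dhomogP hom; rewrite msizeE; apply/bigmax_leqP_seq => m /hom ->. Qed.

Definition deriv0_weight {K : fieldType} {d : nat} (l : 'I_d.+1) : K :=
  (tnth (lagrange d.+1 (fun k : nat => k%:R)) l)`_1.

Lemma deriv0_interp (K : numFieldType) (d : nat) (q : {poly K}) : (size q <= d.+1)%N ->
  q^`().[0] = \sum_(l < d.+1) deriv0_weight l * q.[l%:R].
Proof.
move=> size_q; have nat_inj : injective (fun k : nat => k%:R : K).
  by move=> a b /eqP; rewrite eqr_nat => /eqP.
rewrite horner_coef0 coef_deriv mulr1n {1}(lagrange_gen _ nat_inj size_q) // coef_sum.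
by apply: eq_bigr => l _; rewrite coefCM mulrC.
Qed.

Section DirectionalDerivative.
Variables (K : numFieldType) (n d : nat) (p : {mpoly K[n]}).
Hypothesis size_p : (msize p <= d.+1)%N.

Lemma directional_deriv_interp (y u : 'I_n -> K) :
  \sum_(l < d.+1) deriv0_weight l * p.@[fun j => y j + l%:R * u j] =
  \sum_(j < n) u j * (p^`M(j)).@[y].
Proof.
pose h j := (y j)%:P + 'X * (u j)%:P.
have size_h j : (size (h j) <= 2)%N.
  apply: leq_trans (size_polyD _ _) _; rewrite geq_max (leq_trans (size_polyC_leq1 _)) //.
  by apply: leq_trans (size_polyMleq _ _) _; rewrite size_polyX; have := size_polyC_leq1 (u j); lia.
transitivity ((mmap (@polyC K) h p)^`().[0]).
  rewrite (deriv0_interp (size_mmap size_h size_p)); apply: eq_bigr => l _.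
  by rewrite horner_mmap; congr (_ * _); apply: meval_eq => j; rewrite !hornerE.
rewrite deriv_mmap horner_sum; apply: eq_bigr => j _.
rewrite hornerM horner_mmap !derivE /= !hornerE; congr (_ * _).
by apply: meval_eq => k; rewrite !hornerE.
Qed.

Lemma partial_deriv_interp (y : 'I_n -> K) (i : 'I_n) :
  \sum_(l < d.+1) deriv0_weight l * p.@[fun j => if j == i then y j + l%:R else y j] =
  (p^`M(i)).@[y].
Proof.
rewrite (eq_bigr (fun l => deriv0_weight l * p.@[fun j => y j + l%:R * (j == i)%:R])).
  rewrite directional_deriv_interp (bigD1 i) //= eqxx mul1r big1 ?addr0 // => j /negbTE ->.
  by rewrite mul0r.
move=> l _; congr (_ * _); apply: meval_eq => j.
by case: eqP => _; rewrite ?mulr1 ?mulr0 ?addr0.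
Qed.

End DirectionalDerivative.

Lemma mderiv_map_mpoly (K S : nzRingType) (f : {additive K -> S}) n (p : {mpoly K[n]}) i :
  (map_mpoly f p)^`M(i) = map_mpoly f (p^`M(i)).
Proof. by apply/mpolyP => m; rewrite mcoeff_mderiv !mcoeff_map_mpoly mcoeff_mderiv raddfMn. Qed.

Lemma meval_map_mpoly (K S : comNzRingType) (f : {rmorphism K -> S}) n (p : {mpoly K[n]}) x :
  (map_mpoly f p).@[fun j => f (x j)] = f p.@[x].
Proof.
elim/mpolyind: p => [|c m p _ _ IHp]; first by rewrite !raddf0.
rewrite !raddfD /= IHp map_mpolyZ map_mpolyX !mevalZ !mevalX rmorphM rmorph_prod.
by congr (_ * _ + _); apply: eq_bigr => j _; rewrite rmorphXn.
Qed.

Lemma msize_map_mpoly (K S : nzRingType) (f : {rmorphism K -> S}) n (p : {mpoly K[n]}) :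
  injective f -> msize (map_mpoly f p) = msize p.
Proof. by move=> f_inj; rewrite !msizeE (perm_big _ (msupp_map_mpoly _ f_inj)). Qed.

Definition hess_neglog_formula (K : fieldType) n (q : {mpoly K[n]}) (x w : 'I_n -> K) i : K :=
  ((q^`M(i)).@[x] * (\sum_(j < n) w j * (q^`M(j)).@[x]) / q.@[x]
   - \sum_(j < n) w j * ((q^`M(i))^`M(j)).@[x]) / q.@[x].

Lemma map_hess_neglog_formula (K S : fieldType) (f : {rmorphism K -> S}) n
    (q : {mpoly K[n]}) x w i :
  f (hess_neglog_formula q x w i) =
  hess_neglog_formula (map_mpoly f q) (fun j => f (x j)) (fun j => f (w j)) i.
Proof.
rewrite /hess_neglog_formula !mderiv_map_mpoly !meval_map_mpoly !(fmorph_div, rmorphB, rmorphM).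
by congr ((_ * _ / _ - _) / _); rewrite rmorph_sum; apply: eq_bigr => j _;
  rewrite rmorphM ?mderiv_map_mpoly meval_map_mpoly.
Qed.

Lemma hess_neglog_mulE (R : rcfType) n (p : {mpoly R[n]}) x w i :
  hess_neglog_mul p x w i = hess_neglog_formula p x w i.
Proof.
rewrite /hess_neglog_mul /hess_neglog /hess_neglog_formula.
rewrite mulr_sumr !mulr_suml -sumrB mulr_suml; apply: eq_bigr => j _.
by rewrite expr2 invfM; move: (p.@[x])^-1 => u; ring.
Qed.

(** * Straight-line programs *)

Section Builder.
Variable C : Type.

(* A builder is given the index of the first free register; it returns the code to append
   and the registers holding its results. *)
Definition builder A := nat -> seq (instr C) * A.

Definition bret A (a : A) : builder A := fun=> ([::], a).

Definition bbind A B (m : builder A) (k : A -> builder B) : builder B := fun s =>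
  let: (c1, a) := m s in let: (c2, b) := k a (s + size c1) in (c1 ++ c2, b).

Definition layer (I : finType) (g : I -> instr C) : builder (I -> nat) :=
  fun s => ([seq g i | i <- enum I], fun i => s + enum_rank i)%N.

Definition code_size A (b : builder A) (k : nat) := forall s, size (b s).1 = k.

Lemma code_size_ret A (a : A) : code_size (bret a) 0.
Proof. by []. Qed.

Lemma code_size_bind A B (m : builder A) (k : A -> builder B) km kk :
  code_size m km -> (forall a, code_size (k a) kk) -> code_size (bbind m k) (km + kk).
Proof.
move=> size_m size_k s; rewrite /bbind; have := size_m s.
case: (m s) => c1 a /= <-; have := size_k a (s + size c1).
by case: (k a _) => c2 b /= <-; rewrite size_cat.
Qed.

Lemma code_size_layer (I : finType) (g : I -> instr C) : code_size (layer g) #|I|.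
Proof. by move=> s; rewrite size_map -cardE. Qed.

(* The first 2n registers hold the inputs x and w, see [run]. *)
Definition compile (n : nat) (b : builder ('I_n -> nat)) : program C :=
  Program (b (n + n)%N).1 [seq (b (n + n)%N).2 i | i <- enum 'I_n].

Lemma size_compile n (b : builder ('I_n -> nat)) k :
  code_size b k -> size (instrs (compile b)) = k.
Proof. by move=> b_k; apply: b_k. Qed.

Lemma cost_le_size TO (P : program C) :
  (0 < TO)%N -> (cost TO P <= size (instrs P) * TO)%N.
Proof.
move=> TO_gt0; rewrite /cost -sum1_size big_distrl /=.
by apply: leq_sum => c _; rewrite mul1n; case: c.
Qed.

End Builder.
Arguments bret {C A} a _.

Notation "'let*' x := m 'in' k" := (bbind m (fun x => k))
  (at level 200, x name, m at level 100, k at level 200).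

Section Combinators.
Variable C : Type.

Fixpoint sum_layers (I : finType) (t : I -> nat -> nat) (m : nat) : builder C (I -> nat) :=
  if m is m'.+1 then let* s := sum_layers t m' in layer (fun i => IAdd C (s i) (t i m))
  else bret (fun i => t i 0%N).

Lemma code_size_sum_layers (I : finType) (t : I -> nat -> nat) m :
  code_size (sum_layers t m) (m * #|I|).
Proof.
elim: m => [|m IHm] /=; first exact: code_size_ret.
by rewrite mulSn addnC; apply: code_size_bind IHm _ => s; apply: code_size_layer.
Qed.

Definition call_oracle (n : nat) (f : 'I_n -> nat) : instr C :=
  IOracle C [seq f j | j <- enum 'I_n].
End Combinators.

Section Semantics.
Variables (R : rcfType) (n : nat) (oracle : ('I_n -> R[i]) -> R[i]).
Local Notation C := R[i].
Local Notation exec := (exec_instr oracle).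
Local Notation run_code := (run_instrs oracle).

Lemma run_code_cons E c cs : run_code E (c :: cs) = run_code (rcons E (exec E c)) cs.
Proof. by []. Qed.

Lemma run_code_extends E cs : exists W, run_code E cs = E ++ W.
Proof.
elim: cs E => [|c cs IHcs] E; first by exists [::]; rewrite cats0.
rewrite run_code_cons; have [W ->] := IHcs (rcons E (exec E c)).
by exists (exec E c :: W); rewrite cat_rcons.
Qed.

Lemma size_run_code E cs : size (run_code E cs) = (size E + size cs)%N.
Proof.
elim: cs E => [|c cs IHcs] E /=; first by rewrite addn0.
by rewrite IHcs size_rcons addSnnS.
Qed.

Definition exec_builder A (b : builder C A) (E : seq C) : seq C * A :=
  let: (cs, a) := b (size E) in (run_code E cs, a).

Lemma exec_bind A B (m : builder C A) (k : A -> builder C B) E :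
  exec_builder (bbind m k) E =
  let: (E1, a) := exec_builder m E in exec_builder (k a) E1.
Proof.
rewrite /exec_builder /bbind; case: (m (size E)) => c1 a.
by rewrite size_run_code; case: (k a _) => c2 b; rewrite /run_instrs foldl_cat.
Qed.

(* Facts about registers quantify over all extensions of the environment, so they persist
   while later code runs. *)
Definition stores (E : seq C) (r : nat) (v : C) := forall W, nth 0 (E ++ W) r = v.

Definition evals (E : seq C) (c : instr C) (v : C) := forall W, exec (E ++ W) c = v.

Definition yields (I : finType) (b : builder C (I -> nat)) (E : seq C) (v : I -> C) :=
  forall i, stores (exec_builder b E).1 ((exec_builder b E).2 i) (v i).

Lemma stores_catl E W r v : stores E r v -> stores (E ++ W) r v.
Proof. by move=> Er W'; rewrite -catA. Qed.

Lemma eq_yields (I : finType) (b : builder C (I -> nat)) E v v' :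
  v =1 v' -> yields b E v -> yields b E v'.
Proof. by move=> vv' b_v i; rewrite -vv'. Qed.

Lemma yields_ret (I : finType) (f : I -> nat) E v :
  (forall i, stores E (f i) (v i)) -> yields (bret f) E v.
Proof. by []. Qed.

Lemma yields_bind (I J : finType) (m : builder C (I -> nat))
    (k : (I -> nat) -> builder C (J -> nat)) E u v :
  yields m E u ->
  (forall E' f, (forall r x, stores E r x -> stores E' r x) ->
     (forall i, stores E' (f i) (u i)) -> yields (k f) E' v) ->
  yields (bbind m k) E v.
Proof.
rewrite /yields exec_bind => m_u k_v.
have [W E1E] : exists W, (exec_builder m E).1 = E ++ W.
  by rewrite /exec_builder; case: (m _) => cs a; apply: run_code_extends.
move: m_u; case: (exec_builder m E) E1E => E1 f /= -> m_u.
by apply: k_v m_u => r x; apply: stores_catl.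
Qed.

Lemma run_code_map (T : Type) (g : T -> instr C) (v : T -> C) E s :
  (forall i, evals E (g i) (v i)) -> run_code E [seq g i | i <- s] = E ++ [seq v i | i <- s].
Proof.
move=> g_v; suff /(_ [::]) : forall W, run_code (E ++ W) (map g s) = E ++ W ++ map v s.
  by rewrite cats0.
elim: s => [|i s IHs] W /=; first by rewrite cats0.
by rewrite g_v -cats1 -catA IHs -catA.
Qed.

Lemma yields_layer (I : finType) (g : I -> instr C) E v :
  (forall i, evals E (g i) (v i)) -> yields (layer g) E v.
Proof.
move=> g_v i W; rewrite /exec_builder /= (run_code_map _ g_v) -catA.
rewrite nth_cat ltnNge leq_addr /= addKn.
by rewrite nth_cat size_map -cardE ltn_ord (nth_map i) -?cardE // nth_enum_rank.
Qed.

Lemma evals_cst E a : evals E (ICst a) a.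
Proof. by []. Qed.

Lemma evals_add E a b u v : stores E a u -> stores E b v -> evals E (IAdd C a b) (u + v).
Proof. by move=> Ea Eb W /=; rewrite Ea Eb. Qed.

Lemma evals_sub E a b u v : stores E a u -> stores E b v -> evals E (ISub C a b) (u - v).
Proof. by move=> Ea Eb W /=; rewrite Ea Eb. Qed.

Lemma evals_mul E a b u v : stores E a u -> stores E b v -> evals E (IMul C a b) (u * v).
Proof. by move=> Ea Eb W /=; rewrite Ea Eb. Qed.

Lemma evals_div E a b u v : stores E a u -> stores E b v -> evals E (IDiv C a b) (u / v).
Proof. by move=> Ea Eb W /=; rewrite Ea Eb. Qed.

Lemma evals_oracle E (f : 'I_n -> nat) z :
  (forall j, stores E (f j) (z j)) -> evals E (call_oracle C f) (oracle z).
Proof.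
move=> Ef W /=; congr oracle; apply: functional_extensionality => j.
by rewrite (nth_map j) ?size_enum_ord // nth_ord_enum Ef.
Qed.

Lemma yields_sum_layers (I : finType) (t : I -> nat -> nat) m E (v : I -> nat -> C) :
  (forall i l, (l <= m)%N -> stores E (t i l) (v i l)) ->
  yields (sum_layers C t m) E (fun i => \sum_(l < m.+1) v i l).
Proof.
elim: m => [|m IHm] t_v /=.
  by apply: yields_ret => i; rewrite big_ord1; apply: t_v.
apply: yields_bind => [|E' s up s_v]; first by apply: IHm => i l /leqW; apply: t_v.
apply: yields_layer => i; rewrite big_ord_recr.
exact: evals_add (s_v i) (up _ _ (t_v i m.+1 (leqnn _))).
Qed.

Definition input_env (x w : 'I_n -> R) : seq C :=
  [seq real_complex R (x j) | j <- enum 'I_n] ++ [seq real_complex R (w j) | j <- enum 'I_n].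

Lemma size_input_env x w : size (input_env x w) = (n + n)%N.
Proof. by rewrite size_cat !size_map -enumT size_enum_ord. Qed.

Lemma stores_input_x x w (j : 'I_n) : stores (input_env x w) j (real_complex R (x j)).
Proof.
move=> W; rewrite -catA nth_cat size_map -cardE card_ord ltn_ord.
by rewrite (nth_map j) -?cardE ?card_ord // nth_ord_enum.
Qed.

Lemma stores_input_w x w (j : 'I_n) : stores (input_env x w) (n + j) (real_complex R (w j)).
Proof.
move=> W; rewrite -catA nth_cat size_map -cardE card_ord ltnNge leq_addr /= addKn.
rewrite nth_cat size_map -cardE card_ord ltn_ord.
by rewrite (nth_map j) -?cardE ?card_ord // nth_ord_enum.
Qed.

Lemma run_compile (b : builder C ('I_n -> nat)) x w v :
  yields b (input_env x w) v -> forall k, run oracle (compile b) x w k = v k.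
Proof.
move=> b_v k; have := b_v k [::]; rewrite cats0 /exec_builder size_input_env /run /=.
by case: (b (n + n)%N) => cs f /=; rewrite (nth_map k) ?size_enum_ord // nth_ord_enum.
Qed.

End Semantics.

(** * The Hessian-vector product program *)

Section HessianBuilder.
Context {F : fieldType} (n d : nat).
Local Notation N := d.+1.

Definition nodes : builder F ('I_N -> nat) := layer (fun l : 'I_N => ICst (l%:R : F)).

Definition deriv0_builder (I : finType) (t : I -> 'I_N -> nat) : builder F (I -> nat) :=
  let* c := layer (fun l : 'I_N => ICst (deriv0_weight l)) in
  let* ct := layer (fun il : I * 'I_N => IMul F (c il.2) (t il.1 il.2)) in
  sum_layers F (fun i l => ct (i, inord l)) d.

Definition line_builder (x w : 'I_n -> nat) : builder F ('I_N * 'I_n -> nat) :=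
  let* t := nodes in
  let* tw := layer (fun kj : 'I_N * 'I_n => IMul F (t kj.1) (w kj.2)) in
  layer (fun kj : 'I_N * 'I_n => IAdd F (x kj.2) (tw kj)).

Definition partials_builder (K : finType) (y : K * 'I_n -> nat) :
    builder F (K * 'I_n -> nat) :=
  let* t := nodes in
  let* ys := layer (fun kjl : K * 'I_n * 'I_N => IAdd F (y kjl.1) (t kjl.2)) in
  let* ps := layer (fun kil : K * 'I_n * 'I_N => call_oracle F
    (fun j => if j == kil.1.2 then ys (kil.1.1, j, kil.2) else y (kil.1.1, j))) in
  deriv0_builder (fun ki l => ps (ki, l)).

Definition value_grad_builder (K : finType) (y : K * 'I_n -> nat) :
    builder F (K * option 'I_n -> nat) :=
  let* py := layer (fun k : K => call_oracle F (fun j => y (k, j))) in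
  let* g := partials_builder y in
  bret (fun ko : K * option 'I_n => if ko.2 is Some i then g (ko.1, i) else py ko.1).

Definition hess_formula_builder (g : 'I_n -> nat) (P D : nat) (S : 'I_n -> nat) :
    builder F ('I_n -> nat) :=
  let* u := layer (fun i => IMul F (g i) D) in
  let* v := layer (fun i => IDiv F (u i) P) in
  let* r := layer (fun i => ISub F (v i) (S i)) in
  layer (fun i => IDiv F (r i) P).

Definition hess_builder (x w : 'I_n -> nat) : builder F ('I_n -> nat) :=
  let* y := line_builder x w in
  let* pg := value_grad_builder y in
  let* dpg := deriv0_builder (fun o k => pg (k, o)) in
  hess_formula_builder (fun i => pg (ord0, Some i)) (pg (ord0, None))
    (dpg None) (fun i => dpg (Some i)).

Lemma code_size_nodes : code_size nodes N.
Proof. by rewrite -[X in code_size _ X]card_ord; apply: code_size_layer. Qed.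

Lemma code_size_deriv0 (I : finType) (t : I -> 'I_N -> nat) :
  code_size (deriv0_builder t) (N + #|I| * (N + d)).
Proof.
have -> : (N + #|I| * (N + d) = #|'I_N| + (#|{: I * 'I_N}| + d * #|I|))%N.
  by rewrite card_prod card_ord; lia.
apply: (code_size_bind (code_size_layer _)) => c.
apply: (code_size_bind (code_size_layer _)) => ct.
exact: code_size_sum_layers.
Qed.

Lemma code_size_line x w : code_size (line_builder x w) (N + 2 * (N * n)).
Proof.
have -> : (N + 2 * (N * n) = N + (#|{: 'I_N * 'I_n}| + #|{: 'I_N * 'I_n}|))%N.
  by rewrite card_prod !card_ord; lia.
apply: (code_size_bind code_size_nodes) => t.
apply: (code_size_bind (code_size_layer _)) => tw.
exact: code_size_layer.
Qed.

Lemma code_size_partials (K : finType) (y : K * 'I_n -> nat) :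
  code_size (partials_builder y) (N + 2 * (#|K| * n * N) + (N + #|K| * n * (N + d))).
Proof.
have -> : (N + 2 * (#|K| * n * N) + (N + #|K| * n * (N + d)) =
    N + (#|{: K * 'I_n * 'I_N}| +
    (#|{: K * 'I_n * 'I_N}| + (N + #|{: K * 'I_n}| * (N + d)))))%N.
  by rewrite !card_prod !card_ord; lia.
apply: (code_size_bind code_size_nodes) => t.
apply: (code_size_bind (code_size_layer _)) => ys.
apply: (code_size_bind (code_size_layer _)) => ps.
exact: code_size_deriv0.
Qed.

Lemma code_size_value_grad (K : finType) (y : K * 'I_n -> nat) :
  code_size (value_grad_builder y)
    (#|K| + (N + 2 * (#|K| * n * N) + (N + #|K| * n * (N + d)))).
Proof.
rewrite -[X in code_size _ (_ + X)]addn0.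
apply: (code_size_bind (code_size_layer _)) => py.
by apply: (code_size_bind (code_size_partials y)) => g; apply: code_size_ret.
Qed.

Lemma code_size_hess_formula_builder g P D S :
  code_size (hess_formula_builder g P D S) (4 * n).
Proof.
have -> : (4 * n = #|'I_n| + (#|'I_n| + (#|'I_n| + #|'I_n|)))%N by rewrite card_ord; lia.
apply: (code_size_bind (code_size_layer _)) => u.
apply: (code_size_bind (code_size_layer _)) => v.
apply: (code_size_bind (code_size_layer _)) => r.
exact: code_size_layer.
Qed.

Lemma size_hess_program x w : (0 < n)%N -> (0 < d)%N ->
  (size (instrs (compile (hess_builder x w))) <= 40 * n * d ^ 2)%N.
Proof.
move=> n_gt0 d_gt0.
have size_hess : code_size (hess_builder x w) (N + 2 * (N * n) +
    (#|'I_N| + (N + 2 * (#|'I_N| * n * N) + (N + #|'I_N| * n * (N + d))) +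
    (N + #|{: option 'I_n}| * (N + d) + 4 * n))).
  apply: (code_size_bind (code_size_line x w)) => y.
  apply: (code_size_bind (code_size_value_grad y)) => pg.
  apply: (code_size_bind (code_size_deriv0 _)) => dpg.
  exact: code_size_hess_formula_builder.
rewrite (size_compile size_hess) card_option !card_ord; nia.
Qed.

End HessianBuilder.

Section HessianSpec.
Variables (R : rcfType) (n d : nat) (oracle : ('I_n -> R[i]) -> R[i]).
Local Notation C := R[i].
Local Notation N := d.+1.
Local Notation yields := (yields oracle).

Lemma nodes_yields E : yields (nodes d) E (fun l => l%:R).
Proof. by apply: yields_layer => l; apply: evals_cst. Qed.

Lemma deriv0_yields (I : finType) (t : I -> 'I_N -> nat) E (v : I -> 'I_N -> C) :
  (forall i l, stores E (t i l) (v i l)) ->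
  yields (deriv0_builder t) E (fun i => \sum_(l < N) deriv0_weight l * v i l).
Proof.
move=> t_v.
apply: yields_bind => [|E1 c up1 c_v]; first by apply: yields_layer => l; apply: evals_cst.
apply: yields_bind => [|E2 ct up2 ct_v].
  by apply: yields_layer => il; apply: evals_mul (c_v il.2) (up1 _ _ (t_v il.1 il.2)).
pose v' i l := let l' : 'I_N := inord l in deriv0_weight l' * v i l'.
apply: (eq_yields (v := fun i => \sum_(l < N) v' i l)) => [i|].
  by apply: eq_bigr => l _; rewrite /v' inord_val.
by apply: yields_sum_layers => i l _; apply: ct_v.
Qed.

Lemma line_yields (x w : 'I_n -> nat) (X W : 'I_n -> C) E :
  (forall j, stores E (x j) (X j)) -> (forall j, stores E (w j) (W j)) ->
  yields (line_builder d x w) E (fun kj => X kj.2 + kj.1%:R * W kj.2).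
Proof.
move=> x_X w_W.
apply: (yields_bind (nodes_yields E)) => E1 t up1 t_v.
apply: yields_bind => [|E2 tw up2 tw_v].
  by apply: yields_layer => kj; apply: evals_mul (t_v kj.1) (up1 _ _ (w_W kj.2)).
by apply: yields_layer => kj; apply: evals_add (up2 _ _ (up1 _ _ (x_X kj.2))) (tw_v kj).
Qed.

Lemma hess_formula_builder_yields (g : 'I_n -> nat) P D (S : 'I_n -> nat) G Pv Dv Sv E :
  (forall i, stores E (g i) (G i)) -> stores E P Pv -> stores E D Dv ->
  (forall i, stores E (S i) (Sv i)) ->
  yields (hess_formula_builder g P D S) E (fun i => (G i * Dv / Pv - Sv i) / Pv).
Proof.
move=> g_G P_Pv D_Dv S_Sv.
apply: yields_bind => [|E1 u up1 u_v].
  by apply: yields_layer => i; apply: evals_mul (g_G i) D_Dv.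
apply: yields_bind => [|E2 v up2 v_v].
  by apply: yields_layer => i; apply: evals_div (u_v i) (up1 _ _ P_Pv).
apply: yields_bind => [|E3 r up3 r_v].
  by apply: yields_layer => i; apply: evals_sub (v_v i) (up2 _ _ (up1 _ _ (S_Sv i))).
by apply: yields_layer => i; apply: evals_div (r_v i) (up3 _ _ (up2 _ _ (up1 _ _ P_Pv))).
Qed.

Variable q : {mpoly C[n]}.
Hypothesis oracle_q : forall z, oracle z = q.@[z].
Hypothesis size_q : (msize q <= N)%N.

Definition jet (o : option 'I_n) : {mpoly C[n]} := if o is Some i then q^`M(i) else q.

Lemma msize_jet o : (msize (jet o) <= N)%N.
Proof. by case: o => [i|] //=; apply: leq_trans (msize_mderiv _ _) size_q. Qed.

Lemma partials_yields (K : finType) (y : K * 'I_n -> nat) (Y : K -> 'I_n -> C) E :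
  (forall kj, stores E (y kj) (Y kj.1 kj.2)) ->
  yields (partials_builder d y) E (fun ki => (q^`M(ki.2)).@[Y ki.1]).
Proof.
move=> y_Y.
apply: (yields_bind (nodes_yields E)) => E1 t up1 t_v.
apply: yields_bind => [|E2 ys up2 ys_v].
  by apply: yields_layer => kjl; apply: evals_add (up1 _ _ (y_Y kjl.1)) (t_v kjl.2).
pose shifted (kil : K * 'I_n * 'I_N) j :=
  if j == kil.1.2 then Y kil.1.1 j + kil.2%:R else Y kil.1.1 j.
refine (yields_bind (u := fun kil => q.@[shifted kil]) _ _) => [|E3 ps up3 ps_v].
  apply: yields_layer => kil; rewrite -oracle_q; apply: evals_oracle => j.
  by rewrite /shifted; case: eqP => _; [apply: ys_v | apply: up2 _ _ (up1 _ _ (y_Y _))].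
apply: (eq_yields _ (deriv0_yields (fun ki l => ps_v (ki, l)))) => ki.
by rewrite /shifted /=; exact: (@partial_deriv_interp C n d q size_q).
Qed.

Lemma value_grad_yields (K : finType) (y : K * 'I_n -> nat) (Y : K -> 'I_n -> C) E :
  (forall kj, stores E (y kj) (Y kj.1 kj.2)) ->
  yields (value_grad_builder d y) E (fun ko => (jet ko.2).@[Y ko.1]).
Proof.
move=> y_Y.
refine (yields_bind (u := fun k => q.@[Y k]) _ _) => [|E1 py up1 py_v].
  apply: yields_layer => k; rewrite -oracle_q.
  by apply: evals_oracle => j; apply: (y_Y (k, j)).
apply: (yields_bind (partials_yields (fun kj => up1 _ _ (y_Y kj)))) => E2 g up2 g_v.
by apply: yields_ret => -[k [i|]]; [apply: (g_v (k, i)) | apply: up2].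
Qed.

Lemma hess_builder_yields (x w : 'I_n -> nat) (X W : 'I_n -> C) E :
  (forall j, stores E (x j) (X j)) -> (forall j, stores E (w j) (W j)) ->
  yields (hess_builder d x w) E (hess_neglog_formula q X W).
Proof.
move=> x_X w_W; pose Y (k : 'I_N) j := X j + k%:R * W j.
have Y0 : Y ord0 =1 X by move=> j; rewrite /Y mul0r addr0.
apply: (yields_bind (line_yields x_X w_W)) => E1 y up1 y_v.
apply: (yields_bind (value_grad_yields (Y := Y) y_v)) => E2 pg up2 pg_v.
apply: (yields_bind (deriv0_yields (fun o k => pg_v (k, o)))) => E3 dpg up3 dpg_v.
apply: (eq_yields _ (hess_formula_builder_yields (fun i => up3 _ _ (pg_v (ord0, Some i)))
  (up3 _ _ (pg_v (ord0, None))) (dpg_v None) (fun i => dpg_v (Some i)))) => i /=.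
rewrite /hess_neglog_formula !(meval_eq _ Y0) /Y (directional_deriv_interp size_q).
by rewrite (directional_deriv_interp (msize_jet (Some i))).
Qed.

End HessianSpec.

Theorem lemmaD3 (R : rcfType) :
  exists c : nat, forall n d : nat, (0 < n)%N -> (0 < d)%N ->
  exists P : program R[i],
    (forall TO : nat, (0 < TO)%N -> (cost TO P <= c * n * d ^ 2 * TO)%N) /\
    (forall (p : {mpoly R[n]}) (x w : 'I_n -> R),
       hyperbolic d p -> p.@[x] != 0 ->
       forall k : 'I_n, run (cevalp p) P x w k = real_complex R (hess_neglog_mul p x w k)).
Proof.
exists 40 => n d n_gt0 d_gt0.
exists (compile (hess_builder (F := R[i]) d (fun j : 'I_n => j : nat) (fun j => n + j)%N)).
split.
  move=> TO TO_gt0; apply: leq_trans (cost_le_size _ TO_gt0) _.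
  by rewrite leq_mul2r size_hess_program ?orbT.
move=> p x w [p_homog _] _ k.
have size_pC : (msize (map_mpoly (real_complex R) p) <= d.+1)%N.
  by rewrite msize_map_mpoly ?msize_dhomog //; apply: complexI.
rewrite (run_compile (hess_builder_yields (fun z => erefl) size_pC
  (stores_input_x x w) (stores_input_w x w))).
by rewrite hess_neglog_mulE map_hess_neglog_formula.
Qed.
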